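(* Consider a qutrit ($\mathbb{C}^3$) with coupling operators the eight Gell-Mann matrices $\sigma^s_{01},\sigma^s_{02},\sigma^s_{12},\sigma^a_{01},\sigma^a_{02},\sigma^a_{12},\sigma^d_1,\sigma^d_2$ and vanishing Hamiltonian. Then the quantum filtering equation in projective coordinates $W=(1,w_1,w_2)$, \[ dw_k=\frac12\sum_j[w_k(L_j^*L_jW)_0-(L_j^*L_jW)_k]\,dt+\sum_j[w_k(L_jW)_0^2-(L_jW)_0(L_jW)_k]\,dt+\sum_j[(L_jW)_k-w_k(L_jW)_0]\,dY^j_t,\quad k=1,2, \] (with $j$ running over the eight Gell-Mann matrices $L_j$ and $Y=(Y^j)$ an eight-dimensional process indexed correspondingly as $Y^{01,s},Y^{02,s},Y^{12,s},Y^{01,a},Y^{02,a},Y^{12,a},Y^{1,d},Y^{2,d}$) takes the form \[ \begin{aligned} dw_1&=(1-w_1^2)\,dY^{01,s}_t-w_1w_2\,dY^{02,s}_t+w_2\,dY^{12,s}_t+i(1+w_1^2)\,dY^{01,a}_t+iw_1w_2\,dY^{02,a}_t-iw_2\,dY^{12,a}_t-2w_1\,dY^{1,d}_t,\\ dw_2&=-w_1w_2\,dY^{01,s}_t+(1-w_2^2)\,dY^{02,s}_t+w_1\,dY^{12,s}_t+iw_1w_2\,dY^{01,a}_t+i(1+w_2^2)\,dY^{02,a}_t+iw_1\,dY^{12,a}_t-w_2\,dY^{1,d}_t-\sqrt3\,w_2\,dY^{2,d}_t, \end{aligned} \] with all $dt$-terms vanishing. Moreover, the equation has exactly the same form when rewritten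 in terms of the innovation process $B$ defined by $dB^{jk,s}_t=dY^{jk,s}_t-2\langle\sigma^s_{jk}\rangle_W\,dt$, $dB^{jk,a}_t=dY^{jk,a}_t-2\langle\sigma^a_{jk}\rangle_W\,dt$, $dB^{k,d}_t=dY^{k,d}_t-2\langle\sigma^d_k\rangle_W\,dt$. Finally, when $Y$ is a standard eight-dimensional Wiener process, the diffusion operator $D$ of this system equals $2\Delta_{pro}$, where \[ \Delta_{pro}S=(1+|w_1|^2+|w_2|^2)\Big[(1+|w_1|^2)\frac{\partial^2S}{\partial w_1\partial\bar w_1}+(1+|w_2|^2)\frac{\partial^2S}{\partial w_2\partial\bar w_2}+w_1\bar w_2\frac{\partial^2S}{\partial w_1\partial\bar w_2}+\bar w_1w_2\frac{\partial^2S}{\partial\bar w_1\partial w_2}\Big] \] is the second order part of the Laplace–Beltrami operator on the complex projective space $P\mathbb{C}^2$.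
   Context: Indices of vectors in $\mathbb{C}^3$ run over $0,1,2$; $(v)_k$ is the $k$-th coordinate. The Gell-Mann matrices: $\sigma^s_{jk}$ ($0\le j<k\le2$) has entries $1$ at positions $(j,k)$ and $(k,j)$ and $0$ elsewhere; $\sigma^a_{jk}$ ($0\le j<k\le 2$) has $-i$ at $(j,k)$, $i$ at $(k,j)$ and $0$ elsewhere; $\sigma^d_1=\mathrm{diag}(1,-1,0)$, $\sigma^d_2=\frac1{\sqrt3}\mathrm{diag}(1,1,-2)$. For a matrix $A$, $\langle A\rangle_W=(W,AW)/(W,W)$ with the standard Hermitian inner product. The projective coordinates are $w_k=\chi_k/\chi_0$ for a state vector $\chi\in\mathbb{C}^3$. *)

From mathcomp Require Import all_boot all_order all_algebra.
Set Implicit Arguments.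
Unset Strict Implicit.
Unset Printing Implicit Defensive.
Import Order.TTheory GRing.Theory Num.Theory.
Local Open Scope ring_scope.

Section QutritDefs.
Variable C : numClosedFieldType.

Definition gm_s (j k : 'I_3) : 'M[C]_3 :=
  \matrix_(r, c) (if ((r == j) && (c == k)) || ((r == k) && (c == j)) then 1 else 0).
Definition gm_a (j k : 'I_3) : 'M[C]_3 :=
  \matrix_(r, c) (if (r == j) && (c == k) then - 'i
                  else if (r == k) && (c == j) then 'i else 0).
Definition gm_d1 : 'M[C]_3 :=
  \matrix_(r, c) (if r == c then [:: 1; -1; 0]`_r else 0).
Definition gm_d2 : 'M[C]_3 :=
  (sqrtC 3)^-1 *: \matrix_(r, c) (if r == c then [:: 1; 1; -2]`_r else 0).

Definition i0 : 'I_3 := inord 0.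
Definition i1 : 'I_3 := inord 1.
Definition i2 : 'I_3 := inord 2.

(* The eight coupling operators L_j, j : 'I_8, in the order
   s01, s02, s12, a01, a02, a12, d1, d2 (matching Y^{01,s},...,Y^{2,d}). *)
Definition L (j : 'I_8) : 'M[C]_3 :=
  match val j with
  | 0 => gm_s i0 i1 | 1 => gm_s i0 i2 | 2 => gm_s i1 i2
  | 3 => gm_a i0 i1 | 4 => gm_a i0 i2 | 5 => gm_a i1 i2
  | 6 => gm_d1 | _ => gm_d2
  end.

Definition adjmx (A : 'M[C]_3) : 'M[C]_3 := map_mx Num.conj A^T.

Definition Wvec (w1 w2 : C) : 'cV[C]_3 := \col_(i < 3) [:: 1; w1; w2]`_i.
Definition crd (v : 'cV[C]_3) (k : 'I_3) : C := v k 0.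

Definition hdot (u v : 'cV[C]_3) : C := \sum_(i < 3) (u i 0)^* * v i 0.
Definition expect (A : 'M[C]_3) (W : 'cV[C]_3) : C := hdot W (A *m W) / hdot W W.

(* dt-coefficient of dw_k in the filtering equation written with dY *)
Definition drift (k : 'I_3) (w1 w2 : C) : C :=
  let W := Wvec w1 w2 in
  2^-1 * \sum_(j < 8) (crd W k * crd (adjmx (L j) *m L j *m W) i0
                        - crd (adjmx (L j) *m L j *m W) k)
  + \sum_(j < 8) (crd W k * (crd (L j *m W) i0) ^+ 2
                  - crd (L j *m W) i0 * crd (L j *m W) k).

(* dY^j-coefficient of dw_k *)
Definition diffc (k : 'I_3) (j : 'I_8) (w1 w2 : C) : C :=
  let W := Wvec w1 w2 in crd (L j *m W) k - crd W k * crd (L j *m W) i0.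

(* dt-coefficient of dw_k after substituting dY^j = dB^j + 2 <L_j>_W dt *)
Definition drift_innov (k : 'I_3) (w1 w2 : C) : C :=
  drift k w1 w2 + \sum_(j < 8) diffc k j w1 w2 * (2 * expect (L j) (Wvec w1 w2)).

(* Second-order (diffusion) operators are represented through their action on
   the Wirtinger Hessian H of a C^2 function S at the point (w1,w2).
   Variables are indexed by 'I_4 as  0 = w1, 1 = w2, 2 = conj w1, 3 = conj w2,
   and H a b = d^2 S / (dz_a dz_b)  (symmetric in a, b). *)

Definition zcoef (a : 'I_4) (j : 'I_8) (w1 w2 : C) : C :=
  match val a with
  | 0 => diffc i1 j w1 w2
  | 1 => diffc i2 j w1 w2
  | 2 => (diffc i1 j w1 w2)^*
  | _ => (diffc i2 j w1 w2)^*
  end.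

(* Diffusion operator when Y is a standard 8-dim Wiener process
   (dY^j dY^l = delta_jl dt):  D S = 1/2 sum_{a,b} (dz_a dz_b / dt) S_{z_a z_b} *)
Definition diffusion_op (w1 w2 : C) (H : 'M[C]_4) : C :=
  2^-1 * \sum_(a < 4) \sum_(b < 4)
           (\sum_(j < 8) zcoef a j w1 w2 * zcoef b j w1 w2) * H a b.

Definition Delta_pro (w1 w2 : C) (H : 'M[C]_4) : C :=
  (1 + `|w1| ^+ 2 + `|w2| ^+ 2) *
  ((1 + `|w1| ^+ 2) * H (inord 0) (inord 2)
   + (1 + `|w2| ^+ 2) * H (inord 1) (inord 3)
   + w1 * w2^* * H (inord 0) (inord 3)
   + w1^* * w2 * H (inord 2) (inord 1)).

End QutritDefs.

(* The Gell-Mann matrices, normalised by tr(l_a l_b) = 2 d_ab, satisfy the su(3)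
   completeness relation  sum_a (l_a)_pq (l_a)_rs = 2 d_ps d_qr - (2/3) d_pq d_rs.
   Contracted with W it gives sum_a (l_a W)_p (l_a W)_q = (4/3) W_p W_q and
   sum_a l_a^2 = (16/3) I, so every dt-term of the filter, with or without the
   innovation correction, is a combination of such sums that cancels in the chart
   W_0 = 1.  Contracted with W and its conjugate it gives the Gram matrix of the
   noise coefficients of (w, conj w): zero on the holomorphic and antiholomorphic
   blocks and 2 |W|^2 (d_kl + w_k conj w_l) on the mixed ones, i.e. the
   Fubini-Study metric, whence D = 2 Delta_pro. *)

From mathcomp Require Import all_boot all_order all_algebra ring.
Set Implicit Arguments.
Unset Strict Implicit.
Unset Printing Implicit Defensive.
Import Order.TTheory GRing.Theory Num.Theory.
Local Open Scope ring_scope.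

Section Completeness.
Variables (C : numClosedFieldType) (n m : nat) (G : 'I_m -> 'M[C]_n).

(* The completeness relation of a basis of the traceless Hermitian n x n
   matrices that is orthonormal for (A, B) |-> tr(AB) / 2. *)
Hypothesis G_complete : forall p q r s : 'I_n,
  \sum_j G j p q * G j r s
  = 2 * ((p == s)%:R * (q == r)%:R) - 2 / n%:R * ((p == q)%:R * (r == s)%:R).

Hypothesis G_herm : forall j p q, (G j p q)^* = G j q p.

Lemma sum_delta (F : 'I_n -> C) q : \sum_a (a == q)%:R * F a = F q.
Proof. by rewrite (bigD1 q) //= eqxx mul1r big1 ?addr0 // => a /negbTE ->; rewrite mul0r. Qed.

Lemma sum_mulmx_mul (u v : 'cV[C]_n) p q :
  \sum_j (G j *m u) p 0 * (G j *m v) q 0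
  = 2 * (u q 0 * v p 0) - 2 / n%:R * (u p 0 * v q 0).
Proof.
under eq_bigr do rewrite !mxE big_distrlr /=.
rewrite exchange_big; under eq_bigr do rewrite exchange_big /=.
under eq_bigr do under eq_bigr do under eq_bigr do rewrite mulrACA.
under eq_bigr do under eq_bigr do rewrite -big_distrl G_complete /=.
transitivity (\sum_a (a == q)%:R * \sum_b (b == p)%:R * (2 * (u a 0 * v b 0))
  - \sum_a (a == p)%:R * \sum_b (b == q)%:R * (2 / n%:R * (u a 0 * v b 0))).
  rewrite -sumrB; apply: eq_bigr => a _; rewrite !mulr_sumr -sumrB.
  by apply: eq_bigr => b _; rewrite [p == b]eq_sym [q == b]eq_sym [p == a]eq_sym; ring.
by rewrite !sum_delta.
Qed.

Lemma sum_mulmx_self : \sum_j G j *m G j = (2 * n%:R - 2 / n%:R)%:M.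
Proof.
apply/matrixP => p q; rewrite summxE [RHS]mxE.
under eq_bigr do rewrite mxE.
rewrite exchange_big /=; under eq_bigr do rewrite G_complete eqxx mulr1.
rewrite sumrB sumr_const card_ord -mulr_sumr.
under [X in _ - _ * X]eq_bigr => a _ do rewrite [p == a]eq_sym.
rewrite sum_delta.
by case: (p == q); rewrite ?mulr1 ?mulr0 ?mulr0n ?mul0rn ?subr0 // mulr_natr.
Qed.

Lemma sum_mulmx_conj (u : 'cV[C]_n) p q :
  \sum_j (G j *m u) p 0 * ((G j *m u) q 0)^*
  = 2 * (p == q)%:R * \sum_a u a 0 * (u a 0)^* - 2 / n%:R * (u p 0 * (u q 0)^*).
Proof.
under eq_bigr do rewrite !mxE rmorph_sum /= big_distrlr.
rewrite exchange_big; under eq_bigr do rewrite exchange_big /=.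
under eq_bigr do under eq_bigr do under eq_bigr do rewrite rmorphM /= G_herm mulrACA.
under eq_bigr do under eq_bigr do rewrite -big_distrl G_complete /=.
transitivity (\sum_a (p == q)%:R * \sum_b (b == a)%:R * (2 * (u a 0 * (u b 0)^*))
  - \sum_a (a == p)%:R * \sum_b (b == q)%:R * (2 / n%:R * (u a 0 * (u b 0)^*))).
  rewrite -sumrB; apply: eq_bigr => a _; rewrite !mulr_sumr -sumrB.
  apply: eq_bigr => b _; rewrite [a == b]eq_sym [p == a]eq_sym.
  (* [ring] treats [_^*] as an atom only once it is named. *)
  by set y := _^*; ring.
under eq_bigr do rewrite sum_delta.
by rewrite !sum_delta -!mulr_sumr mulrCA mulrA.
Qed.

(* The dY^j-coefficient of d(v_k / v_z) in the affine chart v_z = 1; cf. [diffc]. *)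
Definition chart_coef (v : 'cV[C]_n) (z k : 'I_n) (j : 'I_m) : C :=
  (G j *m v) k 0 - v k 0 * (G j *m v) z 0.

Section AffineChart.
Variables (v : 'cV[C]_n) (z : 'I_n).
Hypothesis v_z : v z 0 = 1.

Lemma sum_chart_coef_mulmx k a : \sum_j chart_coef v z k j * (G j *m v) a 0 = 0.
Proof.
under eq_bigr do rewrite mulrBl -mulrA.
by rewrite sumrB -mulr_sumr !sum_mulmx_mul v_z; ring.
Qed.

Lemma sum_chart_coef_linear k (x : 'I_n -> C) :
  \sum_j chart_coef v z k j * \sum_a x a * (G j *m v) a 0 = 0.
Proof.
under eq_bigr do rewrite mulr_sumr.
rewrite exchange_big big1 // => a _.
under eq_bigr do rewrite mulrCA.
by rewrite -mulr_sumr sum_chart_coef_mulmx mulr0.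
Qed.

Lemma sum_chart_coef_mul k l : \sum_j chart_coef v z k j * chart_coef v z l j = 0.
Proof.
under eq_bigr do rewrite [X in _ * X]/chart_coef mulrBr mulrCA.
by rewrite sumrB -mulr_sumr !sum_chart_coef_mulmx mulr0 subr0.
Qed.

Lemma sum_chart_coef_conj k l : k != z -> l != z ->
  \sum_j chart_coef v z k j * (chart_coef v z l j)^*
  = 2 * (\sum_a v a 0 * (v a 0)^*) * ((k == l)%:R + v k 0 * (v l 0)^*).
Proof.
move=> /negbTE kz /negbTE lz.
transitivity (\sum_j (G j *m v) k 0 * ((G j *m v) l 0)^*
  - (v l 0)^* * \sum_j (G j *m v) k 0 * ((G j *m v) z 0)^*
  - v k 0 * \sum_j (G j *m v) z 0 * ((G j *m v) l 0)^*
  + v k 0 * (v l 0)^* * \sum_j (G j *m v) z 0 * ((G j *m v) z 0)^*).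
  rewrite !mulr_sumr -!sumrB -big_split; apply: eq_bigr => j _ /=.
  by rewrite /chart_coef rmorphB rmorphM; ring.
by rewrite !sum_mulmx_conj kz [z == l]eq_sym lz eqxx v_z conjC1 /=; ring.
Qed.

End AffineChart.
End Completeness.

Section GellMann.
Variable C : numClosedFieldType.

Lemma val_i0 : i0 = 0%N :> nat. Proof. exact: inordK. Qed.
Lemma val_i1 : i1 = 1%N :> nat. Proof. exact: inordK. Qed.
Lemma val_i2 : i2 = 2%N :> nat. Proof. exact: inordK. Qed.

Lemma sqrtC3_sqr : (sqrtC 3 : C) ^+ 2 = 3. Proof. exact: sqrtCK. Qed.
Lemma sqrtC3_neq0 : (sqrtC 3 : C) != 0. Proof. by rewrite sqrtC_eq0 pnatr_eq0. Qed.

Ltac gell_mann_entries :=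
  rewrite /L /gm_s /gm_a /gm_d1 /gm_d2 /= !mxE -!val_eqE /= ?val_i0 ?val_i1 ?val_i2 /=.

Lemma gell_mann_complete (p q r s : 'I_3) :
  \sum_j L C j p q * L C j r s
  = 2 * ((p == s)%:R * (q == r)%:R) - 2 / 3 * ((p == q)%:R * (r == s)%:R).
Proof.
rewrite !big_ord_recl big_ord0; gell_mann_entries.
case: p => [[|[|[|//]]] ?]; case: q => [[|[|[|//]]] ?];
  case: r => [[|[|[|//]]] ?]; case: s => [[|[|[|//]]] ?] /=;
  by field: sqrtC3_sqr (sqrCi C); rewrite ?sqrtC3_neq0.
Qed.

Lemma gell_mann_herm j p q : (L C j p q)^* = L C j q p.
Proof.
have s3 : ((sqrtC 3 : C)^-1)^* = (sqrtC 3)^-1.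
  by rewrite geC0_conj // invr_ge0 sqrtC_ge0 ler0n.
case: j => [[|[|[|[|[|[|[|[|//]]]]]]]] ?]; gell_mann_entries;
  case: p => [[|[|[|//]]] ?]; case: q => [[|[|[|//]]] ?] /=;
  by rewrite ?rmorphM/= ?rmorphN/= ?s3 ?conjC0 ?conjC1 ?conjC_nat ?conjCi ?opprK.
Qed.

Lemma diffc1E (w1 w2 : C) j :
  diffc i1 j w1 w2 =
  [:: 1 - w1 ^+ 2; - (w1 * w2); w2; 'i * (1 + w1 ^+ 2); 'i * (w1 * w2);
      - ('i * w2); - (2 * w1); 0]`_j.
Proof.
rewrite /diffc /crd !mxE !big_ord_recl !big_ord0 !mxE.
by case: j => [[|[|[|[|[|[|[|[|//]]]]]]]] ?]; gell_mann_entries; ring: (sqrCi C).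
Qed.

Lemma diffc2E (w1 w2 : C) j :
  diffc i2 j w1 w2 =
  [:: - (w1 * w2); 1 - w2 ^+ 2; w1; 'i * (w1 * w2); 'i * (1 + w2 ^+ 2);
      'i * w1; - w2; - (sqrtC 3 * w2)]`_j.
Proof.
rewrite /diffc /crd !mxE !big_ord_recl !big_ord0 !mxE.
case: j => [[|[|[|[|[|[|[|[|//]]]]]]]] ?]; gell_mann_entries;
  by field: sqrtC3_sqr (sqrCi C); rewrite ?sqrtC3_neq0.
Qed.

End GellMann.

Section QutritFiltering.
Variables (C : numClosedFieldType) (w1 w2 : C).
Local Notation W := (Wvec w1 w2).

Lemma Wvec_i0 : W i0 0 = 1.
Proof. by rewrite mxE val_i0. Qed.

Lemma diffcE k j : diffc k j w1 w2 = chart_coef (L C) W i0 k j.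
Proof. by []. Qed.

Lemma drift_eq0 k : drift k w1 w2 = 0.
Proof.
have casimir p : \sum_j (adjmx (L C j) *m L C j *m W) p 0 = (2 * 3 - 2 / 3) * W p 0.
  rewrite -summxE -mulmx_suml.
  under eq_bigr => j _ do have -> : adjmx (L C j) = L C j
    by apply/matrixP => p' q'; rewrite !mxE gell_mann_herm.
  by rewrite (sum_mulmx_self (@gell_mann_complete C)) mul_scalar_mx mxE.
rewrite /drift /crd sumrB -mulr_sumr !casimir Wvec_i0 mulr1 [_ * W k 0]mulrC subrr mulr0 add0r.
have -> : \sum_j (W k 0 * (L C j *m W) i0 0 ^+ 2 - (L C j *m W) i0 0 * (L C j *m W) k 0)
          = - \sum_j chart_coef (L C) W i0 k j * (L C j *m W) i0 0.
  by rewrite -sumrN; apply: eq_bigr => j _; rewrite /chart_coef; ring.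
by rewrite (sum_chart_coef_mulmx (@gell_mann_complete C) Wvec_i0) oppr0.
Qed.

Lemma drift_innov_eq0 k : drift_innov k w1 w2 = 0.
Proof.
rewrite /drift_innov drift_eq0 add0r.
have -> : \sum_j diffc k j w1 w2 * (2 * expect (L C j) W)
          = 2 / hdot W W * \sum_j chart_coef (L C) W i0 k j
                              * \sum_a (W a 0)^* * (L C j *m W) a 0.
  by rewrite mulr_sumr; apply: eq_bigr => j _; rewrite /expect /hdot diffcE; ring.
by rewrite (sum_chart_coef_linear (@gell_mann_complete C) Wvec_i0) mulr0.
Qed.

Lemma sum_diffc_mul k l : \sum_j diffc k j w1 w2 * diffc l j w1 w2 = 0.
Proof. exact: (sum_chart_coef_mul (@gell_mann_complete C) Wvec_i0). Qed.

Lemma sum_diffc_conj k l : k != i0 -> l != i0 ->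
  \sum_j diffc k j w1 w2 * (diffc l j w1 w2)^*
  = 2 * (\sum_a W a 0 * (W a 0)^*) * ((k == l)%:R + W k 0 * (W l 0)^*).
Proof. exact: (sum_chart_coef_conj (@gell_mann_complete C) (@gell_mann_herm C) Wvec_i0). Qed.

Lemma sum_ord4 (F : 'I_4 -> C) :
  \sum_a F a = F (inord 0) + F (inord 1) + F (inord 2) + F (inord 3).
Proof.
rewrite !big_ord_recl big_ord0 addr0 !addrA.
by congr (_ + _ + _ + _); congr F; apply: val_inj; rewrite /= inordK.
Qed.

Lemma diffusion_opE (H : 'M[C]_4) :
  H^T = H -> diffusion_op w1 w2 H = 2 * Delta_pro w1 w2 H.
Proof.
move=> HT; have HS a b : H a b = H b a by rewrite -{1}HT mxE.
have n10 : i1 != i0 by rewrite -val_eqE /= val_i0 val_i1.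
have n20 : i2 != i0 by rewrite -val_eqE /= val_i0 val_i2.
have n12 : (i1 == i2) = false by rewrite -val_eqE /= val_i1 val_i2.
have anti k l : \sum_j (diffc k j w1 w2)^* * (diffc l j w1 w2)^* = 0.
  by under eq_bigr do rewrite -rmorphM; rewrite -rmorph_sum sum_diffc_mul rmorph0.
have conj_mul k l : \sum_j (diffc k j w1 w2)^* * diffc l j w1 w2
                    = \sum_j diffc l j w1 w2 * (diffc k j w1 w2)^*.
  by under eq_bigr do rewrite mulrC.
rewrite /diffusion_op /Delta_pro !sum_ord4 /zcoef /= !inordK //=.
rewrite !sum_diffc_mul !anti !conj_mul !sum_diffc_conj //.
rewrite (HS (inord 2) (inord 0)) (HS (inord 3) (inord 0)) (HS (inord 3) (inord 1)).
rewrite (HS (inord 1) (inord 2)) !eqxx [i2 == i1]eq_sym n12.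
rewrite !big_ord_recl big_ord0 !mxE /= ?val_i1 ?val_i2 /= !normCK conjC1.
set c1 := w1^*; set c2 := w2^*.
by field.
Qed.

End QutritFiltering.

Theorem proposition4p1 (C : numClosedFieldType) :
  (* all dt-terms vanish *)
  (forall (w1 w2 : C) (k : 'I_3), (0 < k)%N -> drift k w1 w2 = 0)
  (* the dY-coefficients of dw_1 *)
  /\ (forall (w1 w2 : C) (j : 'I_8),
        diffc i1 j w1 w2 =
        [:: 1 - w1 ^+ 2; - (w1 * w2); w2; 'i * (1 + w1 ^+ 2); 'i * (w1 * w2);
            - ('i * w2); - (2 * w1); 0]`_j)
  (* the dY-coefficients of dw_2 *)
  /\ (forall (w1 w2 : C) (j : 'I_8),
        diffc i2 j w1 w2 =
        [:: - (w1 * w2); 1 - w2 ^+ 2; w1; 'i * (w1 * w2); 'i * (1 + w2 ^+ 2);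
            'i * w1; - w2; - (sqrtC 3 * w2)]`_j)
  (* same form in terms of the innovation process B: dt-terms still vanish *)
  /\ (forall (w1 w2 : C) (k : 'I_3), (0 < k)%N -> drift_innov k w1 w2 = 0)
  (* diffusion operator D = 2 Delta_pro *)
  /\ (forall (w1 w2 : C) (H : 'M[C]_4), H^T = H ->
        diffusion_op w1 w2 H = 2 * Delta_pro w1 w2 H).
Proof.
split; first by move=> w1 w2 k _; exact: drift_eq0.
split; first exact: diffc1E.
split; first exact: diffc2E.
split; first by move=> w1 w2 k _; exact: drift_innov_eq0.
exact: diffusion_opE.
Qed.
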